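(* Let $\mathcal{P}_1,\mathcal{P}_2$ be finite posets with $p_j=|\mathcal{P}_j|$, and for $j=1,2$ let $\mathbf{V}_j\in\mathbb{R}^{p_j\times q_j}$ be a fixed matrix whose columns are the $q_j$ extremal rays of $\mathcal{C}(\mathcal{P}_j)$ (one representative vector per ray). Then for every matrix $\mathbf{T}\in\mathcal{N}_{<\infty}$, the nondecreasing rank of $\mathbf{T}$ equals the smallest nonnegative rank of a matrix $\mathbf{H}\in\mathbb{R}^{q_1\times q_2}$ with nonnegative entries satisfying $\mathbf{T}=\mathbf{V}_1\mathbf{H}\mathbf{V}_2^\intercal$.
   Context: For a finite poset $\mathcal{Q}$, the order cone $\mathcal{C}(\mathcal{Q})$ is the set of $\mathbf{f}\in\mathbb{R}^{\mathcal{Q}}$ with $f_x\ge0$ for all $x$ and $f_x\le f_y$ whenever $x\preceq y$; it is a polyhedral cone with finitely many extremal rays (one-dimensional faces). $\mathcal{N}_{<\infty}$ is the set of matrices $\mathbf{T}=\sum_{i=1}^r\mathbf{a}_i\mathbf{b}_i^\intercal$ (finite $r$) with $\mathbf{a}_i\in\mathcal{C}(\mathcal{P}_1)$, $\mathbf{b}_i\in\mathcal{C}(\mathcal{P}_2)$, and the nondecreasing rank is the minimal such $r$. The nonnegative rank of a nonnegative matrix $\mathbf{H}$ is the minimal $r$ with $\mathbf{H}=\sum_{i=1}^r\mathbf{c}_i\mathbf{d}_i^\intercal$, $\mathbf{c}_i,\mathbf{d}_i$ entrywise nonnegative. *)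

From HB Require Import structures.
From mathcomp Require Import all_boot all_order all_algebra.
From mathcomp Require Import reals.
Set Implicit Arguments. Unset Strict Implicit. Unset Printing Implicit Defensive.
Import Order.TTheory GRing.Theory Num.Theory.
Local Open Scope ring_scope.

Section Defs.
Variable R : realType.

Definition order_cone (d : Order.disp_t) (P : finPOrderType d) (f : P -> R) : Prop :=
  (forall x, 0 <= f x) /\ (forall x y : P, (x <= y)%O -> f x <= f y).

Definition extreme_ray_vec (T : Type) (C : (T -> R) -> Prop) (v : T -> R) : Prop :=
  [/\ C v, (exists x, v x != 0) &
      forall a b : T -> R, C a -> C b -> (forall x, v x = a x + b x) ->
        exists c : R, 0 <= c /\ forall x, a x = c * v x].

Definition extreme_rays_matrix (T : Type) (C : (T -> R) -> Prop) (q : nat)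
    (V : T -> 'I_q -> R) : Prop :=
  (forall i : 'I_q, extreme_ray_vec C (fun x => V x i)) /\
  (forall v, extreme_ray_vec C v ->
     exists! i : 'I_q, exists c : R, 0 < c /\ forall x, v x = c * V x i).

Definition nd_decomp (d1 d2 : Order.disp_t) (P1 : finPOrderType d1)
    (P2 : finPOrderType d2) (T : P1 -> P2 -> R) (r : nat) : Prop :=
  exists (a : 'I_r -> P1 -> R) (b : 'I_r -> P2 -> R),
    [/\ forall i, order_cone (a i), forall i, order_cone (b i) &
        forall x y, T x y = \sum_(i < r) a i x * b i y].

Definition in_Nfin (d1 d2 : Order.disp_t) (P1 : finPOrderType d1)
    (P2 : finPOrderType d2) (T : P1 -> P2 -> R) : Prop :=
  exists r, nd_decomp T r.

Definition is_ndrank (d1 d2 : Order.disp_t) (P1 : finPOrderType d1)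
    (P2 : finPOrderType d2) (T : P1 -> P2 -> R) (r : nat) : Prop :=
  nd_decomp T r /\ forall s, nd_decomp T s -> (r <= s)%N.

Definition nn_decomp (q1 q2 : nat) (H : 'M[R]_(q1, q2)) (r : nat) : Prop :=
  exists (c : 'I_r -> 'I_q1 -> R) (e : 'I_r -> 'I_q2 -> R),
    [/\ forall i k, 0 <= c i k, forall i k, 0 <= e i k &
        forall k l, H k l = \sum_(i < r) c i k * e i l].

Definition is_nnrank (q1 q2 : nat) (H : 'M[R]_(q1, q2)) (r : nat) : Prop :=
  nn_decomp H r /\ forall s, nn_decomp H s -> (r <= s)%N.

Definition feasible_H (d1 d2 : Order.disp_t) (P1 : finPOrderType d1)
    (P2 : finPOrderType d2) (q1 q2 : nat) (V1 : P1 -> 'I_q1 -> R)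
    (V2 : P2 -> 'I_q2 -> R) (T : P1 -> P2 -> R) (H : 'M[R]_(q1, q2)) : Prop :=
  (forall k l, 0 <= H k l) /\
  forall x y, T x y = \sum_(k < q1) \sum_(l < q2) V1 x k * H k l * V2 y l.

End Defs.

From HB Require Import structures.
From mathcomp Require Import all_boot all_order all_algebra.
From mathcomp Require Import reals boolp lra ring.
Set Implicit Arguments.
Unset Strict Implicit.
Unset Printing Implicit Defensive.

Import Order.TTheory GRing.Theory Num.Theory.
Local Open Scope ring_scope.

(* Every element f of an order cone is a nonnegative combination of its
   extremal rays: take a connected component K (for the comparability graph)
   of the support of f; its indicator is an extremal ray, and subtracting it
   scaled by the minimum of f on K stays in the cone and shrinks the support.
   Hence the extremal-ray matrices V1, V2 turn decompositions T = sum a_i b_i^T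
   with a_i, b_i in the order cones into decompositions H = sum c_i e_i^T with
   c_i, e_i nonnegative and T = V1 H V2^T, and back, preserving the number of
   terms; so the two minima coincide. *)

Section ConicSpan.
Variables (R : realType) (T : finType) (C : (T -> R) -> Prop).
Variables (q : nat) (V : T -> 'I_q -> R).
Hypothesis rays : extreme_rays_matrix C V.
Hypothesis peel : forall f, C f -> (exists x, f x != 0) ->
  exists (v : T -> R) (m : R),
    [/\ extreme_ray_vec C v, 0 <= m, C (fun x => f x - m * v x) &
        (#|support (fun x => (f x - m * v x)%R)| < #|support f|)%N].

Lemma conic_span_of_peel f : C f ->
  exists2 h : 'I_q -> R, forall i, 0 <= h i &
    forall x, f x = \sum_(i < q) h i * V x i.
Proof.
have [n] := ubnP #|support f|; elim: n => // n IH in f *; rewrite ltnS => szf Cf.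
case: (pickP (support f)) => [x fx | f0]; last first.
  exists (fun=> 0) => // x; rewrite big1 => [|i _]; last by rewrite mul0r.
  by apply/eqP/negbFE/f0.
have [v [m [ext m0 Cg szg]]] := peel Cf (ex_intro _ x fx).
have [h h0 fVh] := IH _ (leq_trans szg szf) Cg.
have [i0 [[c [c0 vVi0]] _]] := rays.2 v ext.
exists (fun i => h i + (i == i0)%:R * (m * c)).
  by move=> i; rewrite addr_ge0 // !mulr_ge0 // ltW.
move=> y; under eq_bigr do rewrite mulrDl.
rewrite big_split /= -fVh (bigD1 i0) //= eqxx mul1r big1 => [|i /negbTE->].
  by rewrite vVi0 addr0; ring.
by rewrite !mul0r.
Qed.

End ConicSpan.

Section OrderCone.
Variables (R : realType) (d : Order.disp_t) (P : finPOrderType d).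

Lemma order_cone_indicator (A : {pred P}) :
  (forall u v, u \in A -> (u <= v)%O -> v \in A) ->
  @order_cone R d P (fun y => (y \in A)%:R).
Proof.
move=> upA; split=> [y|u v uv]; first exact: ler0n.
by case Au: (u \in A); rewrite ?(upA u v Au uv) ?ler0n.
Qed.

Lemma order_cone_comb q (V : P -> 'I_q -> R) (c : 'I_q -> R) :
  (forall k, order_cone (V^~ k)) -> (forall k, 0 <= c k) ->
  order_cone (fun x => \sum_(k < q) c k * V x k).
Proof.
move=> CV c0; split=> [x|x y xy].
  by apply: sumr_ge0 => k _; rewrite mulr_ge0 //; case: (CV k).
by apply: ler_sum => k _; rewrite ler_wpM2l //; case: (CV k) => _; apply.
Qed.

Section Component.
Variables (f : P -> R) (x0 : P).
Hypotheses (Cf : order_cone f) (fx0 : 0 < f x0).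

Let adj : rel P := fun u v => [&& 0 < f u, 0 < f v & (u >=< v)%O].
Let K : {pred P} := [pred y | connect adj x0 y].

Lemma component_edge u v : adj u v -> (u \in K) = (v \in K).
Proof.
have adjC : symmetric adj by move=> a b; rewrite /adj comparable_sym andbCA.
move=> uv; rewrite !inE; apply/idP/idP => Ku; apply: connect_trans Ku _.
  exact: connect1.
by apply: connect1; rewrite adjC.
Qed.

Lemma component_pos y : y \in K -> 0 < f y.
Proof.
have posC : closed adj [pred z | 0 < f z].
  by move=> u v /and3P[fu fv _]; rewrite !inE fu fv.
by move=> Ky; have := closed_connect posC Ky; rewrite !inE fx0.
Qed.

Lemma component_up u v : u \in K -> (u <= v)%O -> v \in K.
Proof.
move=> Ku uv; have fu := component_pos Ku.
have fv : 0 < f v by apply: lt_le_trans fu (Cf.2 _ _ uv).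
by rewrite -(@component_edge u v) // /adj fu fv le_comparable.
Qed.

Lemma below_component_eq0 u v : v \in K -> u \notin K -> (u <= v)%O -> f u = 0.
Proof.
move=> Kv Ku uv; apply/eqP; rewrite eq_le Cf.1 andbT leNgt; apply: contra Ku => fu.
by rewrite (@component_edge u v) // /adj fu component_pos // le_comparable.
Qed.

Lemma component_extreme : extreme_ray_vec (@order_cone R d P) (fun y => (y \in K)%:R).
Proof.
split; first exact: order_cone_indicator component_up.
  by exists x0; rewrite inE connect0 oner_neq0.
move=> a b [a0 amono] [b0 bmono] ab; exists (a x0); split=> // x.
have a_edge u v : adj u v -> a u = a v.
  move=> uv; have := ab v; rewrite -(component_edge uv) (ab u) => abuv.
  by case/and3P: uv => _ _ /orP[] uv; have := amono _ _ uv; have := bmono _ _ uv; lra.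
case Kx: (x \in K); last first.
  by have := ab x; rewrite Kx /= mulr0; have := a0 x; have := b0 x; lra.
have aC : closed adj [pred z | a z == a x0] by move=> u v /a_edge; rewrite !inE => ->.
by have := closed_connect aC Kx; rewrite !inE eqxx mulr1 => /esym/eqP.
Qed.

Lemma component_peel : exists (v : P -> R) (m : R),
  [/\ extreme_ray_vec (@order_cone R d P) v, 0 <= m,
      order_cone (fun x => f x - m * v x) &
      (#|support (fun x => (f x - m * v x)%R)| < #|support f|)%N].
Proof.
have Kx0 : x0 \in K by rewrite inE connect0.
have [ym Kym ymin] := @arg_minP _ R P x0 K f Kx0.
have m0 : 0 < f ym := component_pos Kym.
exists (fun y => (y \in K)%:R), (f ym); split; [exact: component_extreme|exact: ltW| |].
  split=> [y|u v uv].
    case Ky: (y \in K) => /=; last by rewrite mulr0 subr0 Cf.1.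
    by rewrite mulr1 subr_ge0 ymin.
  case Ku: (u \in K); first by rewrite (component_up Ku uv) lerD2r Cf.2.
  case Kv: (v \in K); last by rewrite !mulr0 !subr0 Cf.2.
  by rewrite (below_component_eq0 Kv (negbT Ku) uv) mulr0 subr0 mulr1 subr_ge0 ymin.
apply/proper_card/properP; split.
  apply/subsetP => y; rewrite ![y \in support _]inE.
  case Ky: (y \in K) => /=; last by rewrite mulr0 subr0.
  by move=> _; rewrite gt_eqF ?component_pos.
exists ym; rewrite ![ym \in support _]inE; first by rewrite gt_eqF.
by rewrite (Kym : ym \in K) /= mulr1 subrr eqxx.
Qed.

End Component.

Lemma order_cone_spanned q (V : P -> 'I_q -> R) (f : P -> R) :
  extreme_rays_matrix (@order_cone R d P) V ->
  order_cone f <->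
  exists2 h : 'I_q -> R, forall i, 0 <= h i &
    forall x, f x = \sum_(i < q) h i * V x i.
Proof.
move=> rays; split; last first.
  move=> [h h0 fVh]; rewrite (funext fVh); apply: order_cone_comb => // k.
  by case: (rays.1 k).
apply: conic_span_of_peel => // g Cg [x gx].
by apply: (component_peel (x0 := x) Cg); rewrite lt_def gx Cg.1.
Qed.

Lemma order_cone_spanned_family q (V : P -> 'I_q -> R) r (a : 'I_r -> P -> R) :
  extreme_rays_matrix (@order_cone R d P) V -> (forall i, order_cone (a i)) ->
  exists c : 'I_r -> 'I_q -> R,
    (forall i k, 0 <= c i k) /\ forall i x, a i x = \sum_(k < q) c i k * V x k.
Proof.
move=> rays Ca.
pose coeffs i (h : 'I_q -> R) :=
  (forall k, 0 <= h k) /\ forall x, a i x = \sum_(k < q) h k * V x k.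
have [c cP] : {c & forall i, coeffs i (c i)}.
  by apply: choice => i; have [h h0 aVh] := (order_cone_spanned (a i) rays).1 (Ca i); exists h.
by exists c; split=> i; case: (cP i).
Qed.

End OrderCone.

Lemma sum_mul_combs (S : comPzRingType) r q1 q2 (A : 'I_q1 -> S) (B : 'I_q2 -> S)
    (c : 'I_r -> 'I_q1 -> S) (e : 'I_r -> 'I_q2 -> S) :
  \sum_(i < r) (\sum_(k < q1) c i k * A k) * (\sum_(l < q2) e i l * B l) =
  \sum_(k < q1) \sum_(l < q2) A k * (\sum_(i < r) c i k * e i l) * B l.
Proof.
under eq_bigr do rewrite big_distrlr /=.
rewrite exchange_big /=; apply: eq_bigr => k _.
rewrite exchange_big /=; apply: eq_bigr => l _.
rewrite mulr_sumr mulr_suml; apply: eq_bigr => i _; ring.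
Qed.

Section Ranks.
Variables (R : realType) (d1 d2 : Order.disp_t).
Variables (P1 : finPOrderType d1) (P2 : finPOrderType d2) (q1 q2 : nat).
Variables (V1 : P1 -> 'I_q1 -> R) (V2 : P2 -> 'I_q2 -> R).
Hypotheses (rays1 : extreme_rays_matrix (@order_cone R d1 P1) V1)
           (rays2 : extreme_rays_matrix (@order_cone R d2 P2) V2).

Lemma nd_decomp_iff_feasible (T : P1 -> P2 -> R) r :
  nd_decomp T r <-> exists H : 'M[R]_(q1, q2), feasible_H V1 V2 T H /\ nn_decomp H r.
Proof.
split=> [[a [b [Ca Cb Tab]]] | [H [[_ TH] [c [e [c0 e0 He]]]]]]; last first.
  exists (fun i x => \sum_(k < q1) c i k * V1 x k).
  exists (fun i y => \sum_(l < q2) e i l * V2 y l).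
  split=> [i|i|x y].
  - by apply/(order_cone_spanned _ rays1); exists (c i).
  - by apply/(order_cone_spanned _ rays2); exists (e i).
  by rewrite TH sum_mul_combs; apply: eq_bigr => k _; apply: eq_bigr => l _; rewrite He.
have [c [c0 aVc]] := order_cone_spanned_family rays1 Ca.
have [e [e0 bVe]] := order_cone_spanned_family rays2 Cb.
have He k l : (\matrix_(k, l) \sum_(i < r) c i k * e i l) k l = \sum_(i < r) c i k * e i l.
  by rewrite mxE.
exists (\matrix_(k, l) \sum_(i < r) c i k * e i l); split; last by exists c, e.
split=> [k l|x y]; first by rewrite He sumr_ge0 // => i _; rewrite mulr_ge0.
rewrite Tab (eq_bigr _ (fun i _ => congr2 *%R (aVc i x) (bVe i y))) sum_mul_combs.
by apply: eq_bigr => k _; apply: eq_bigr => l _; rewrite He.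
Qed.

End Ranks.

Lemma nnrank_exists_le (R : realType) q1 q2 (H : 'M[R]_(q1, q2)) s :
  nn_decomp H s -> exists2 m, (m <= s)%N & is_nnrank H m.
Proof.
move=> Hs; have exP : exists n, `[< nn_decomp H n >] by exists s; apply/asboolP.
case: (ex_minnP exP) => m /asboolP Hm mmin.
exists m; first by apply/mmin/asboolP.
by split=> // t Ht; apply/mmin/asboolP.
Qed.

Theorem lemma8 (R : realType) (d1 d2 : Order.disp_t)
    (P1 : finPOrderType d1) (P2 : finPOrderType d2) (q1 q2 : nat)
    (V1 : P1 -> 'I_q1 -> R) (V2 : P2 -> 'I_q2 -> R) :
  extreme_rays_matrix (@order_cone R d1 P1) V1 ->
  extreme_rays_matrix (@order_cone R d2 P2) V2 ->
  forall T : P1 -> P2 -> R, in_Nfin T ->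
  forall r : nat,
    is_ndrank T r <->
    ((exists H : 'M[R]_(q1, q2), feasible_H V1 V2 T H /\ is_nnrank H r) /\
     (forall (H : 'M[R]_(q1, q2)) (s : nat),
        feasible_H V1 V2 T H -> is_nnrank H s -> (r <= s)%N)).
Proof.
move=> rays1 rays2 T _ r; have ndE := nd_decomp_iff_feasible rays1 rays2 T.
split.
  move=> [Tr rmin]; have [H [FH Hr]] := (ndE r).1 Tr; split.
    by exists H; split=> //; split=> // s Hs; apply/rmin/ndE; exists H.
  by move=> H' s FH' [H's _]; apply/rmin/ndE; exists H'.
move=> [[H [FH [Hr _]]] rmin]; split=> [|s /ndE[H' [FH' H's]]].
  by apply/ndE; exists H.
have [m ms H'm] := nnrank_exists_le H's.
exact: leq_trans (rmin _ _ FH' H'm) ms.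
Qed.
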